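(* There is a function $\delta$ with $\delta(n)\to 0$ as $n\to\infty$ such that for every positive integer $n$ for which a regular Hadamard matrix of order $n$ exists, there exists a real orthogonal $(n+1)\times(n+1)$ matrix $M=(m_{i,j})$ with $(1-\delta(n))\frac{1}{\sqrt{n+1}}\le |m_{i,j}|\le (1+\delta(n))\frac{1}{\sqrt{n+1}}$ for all $i,j$ (i.e. all entries have modulus $(1+o(1))\frac{1}{\sqrt{n+1}}$).
   Context: A Hadamard matrix of order $n$ is an $n\times n$ matrix with entries in $\{+1,-1\}$ whose rows are pairwise orthogonal. It is called regular if all its row sums and all its column sums are equal (to one common value). *)

From HB Require Import structures.
From mathcomp Require Import all_boot all_order all_algebra.
From mathcomp Require Import all_classical all_reals all_analysis.
Set Implicit Arguments. Unset Strict Implicit. Unset Printing Implicit Defensive.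
Import Order.TTheory GRing.Theory Num.Theory.
Local Open Scope ring_scope.

Definition is_hadamard (n : nat) (H : 'M[int]_n) : Prop :=
  (forall i j, H i j = 1 \/ H i j = -1) /\
  (forall i k, i != k -> \sum_(j < n) H i j * H k j = 0).

Definition is_regular (n : nat) (H : 'M[int]_n) : Prop :=
  exists c : int,
    (forall i, \sum_(j < n) H i j = c) /\ (forall j, \sum_(i < n) H i j = c).

Definition regular_hadamard_exists (n : nat) : Prop :=
  exists H : 'M[int]_n, is_hadamard H /\ is_regular H.

Definition orthogonal_mx (R : realType) (m : nat) (M : 'M[R]_m) : Prop :=
  M *m M^T = 1%:M.

From HB Require Import structures.
From mathcomp Require Import all_boot all_order all_algebra.
From mathcomp Require Import all_classical all_reals all_analysis.
From mathcomp Require Import ring lra.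

(* Let H be regular Hadamard with row and column sums c; double counting the
   entries of H H^T gives c^2 = n, so A = H / c is orthogonal with entries
   +-1/sqrt n and row sums 1. Bordering A by a row and a column of
   r = 1/sqrt(n+1) (corner -r) and shifting every entry of A by
   -(1 - r)/n keeps the matrix orthogonal, because r^2 (n + 1) = 1. The shift
   is O(1/n), so every entry lies within 1/n of 1/sqrt n, hence equals
   (1 + O(1/sqrt n))/sqrt(n+1). *)

Import Order.TTheory GRing.Theory Num.Theory.
Local Open Scope classical_set_scope.
Local Open Scope ring_scope.

Lemma hadamard_mulmx_tr {n} (H : 'M[int]_n) : is_hadamard H -> H *m H^T = n%:R%:M.
Proof.
move=> [H_pm H_orth]; apply/matrixP => i k; rewrite !mxE.
under eq_bigr => j _ do rewrite mxE.
case: eqVneq => [<-|ik]; last by rewrite H_orth.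
rewrite (eq_bigr (fun=> 1)) ?sumr_const ?card_ord // => j _.
by case: (H_pm i j) => ->.
Qed.

Lemma hadamard_col_sum_sqr {n} (H : 'M[int]_n) c : (0 < n)%N -> is_hadamard H ->
  (forall j, \sum_i H i j = c) -> c ^+ 2 = n%:R.
Proof.
move=> n_gt0 hadH colH; apply: (@mulfI _ n%:R); first by rewrite pnatr_eq0 -lt0n.
have sum_HHt : \sum_i \sum_k (H *m H^T) i k = n%:R * n%:R.
  rewrite hadamard_mulmx_tr // (eq_bigr (fun=> n%:R)) ?sumr_const ?card_ord ?mulr_natr //.
  move=> i _; rewrite (bigD1 i) //= mxE eqxx big1 ?addr0 // => k.
  by rewrite mxE eq_sym => /negbTE ->.
rewrite -[RHS]sum_HHt.
transitivity (\sum_j (\sum_i H i j) * (\sum_k H k j)).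
  by rewrite (eq_bigr (fun=> c * c)) ?sumr_const ?card_ord ?mulr_natl // => j _; rewrite colH.
under eq_bigr => j _ do rewrite big_distrlr /=.
rewrite exchange_big; apply: eq_bigr => i _; rewrite exchange_big; apply: eq_bigr => k _.
by rewrite !mxE; apply: eq_bigr => j _; rewrite mxE.
Qed.

Definition scaled_int_mx (R : numFieldType) {n} (H : 'M[int]_n) (c : int) : 'M[R]_n :=
  (c%:~R)^-1 *: map_mx intr H.

Section NormalizedRegularHadamard.
Variables (R : rcfType) (n : nat) (H : 'M[int]_n) (c : int).
Hypotheses (n_gt0 : (0 < n)%N) (hadH : is_hadamard H).
Hypotheses (rowH : forall i, \sum_j H i j = c) (colH : forall j, \sum_i H i j = c).

Let A : 'M[R]_n := scaled_int_mx R H c.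

Let c_sqr : (c%:~R : R) ^+ 2 = n%:R.
Proof. by rewrite -rmorphXn (hadamard_col_sum_sqr _ _ n_gt0 hadH colH) rmorph_nat. Qed.

Let c_neq0 : (c%:~R : R) != 0.
Proof. by rewrite -sqrf_eq0 c_sqr pnatr_eq0 -lt0n. Qed.

Lemma scaled_hadamard_mulmx_tr : A *m A^T = 1%:M.
Proof.
rewrite /A /scaled_int_mx linearZ /= -scalemxAl -scalemxAr scalerA.
rewrite map_trmx -map_mxM hadamard_mulmx_tr // map_scalar_mx rmorph_nat.
by rewrite scale_scalar_mx -invfM -expr2 c_sqr mulVf // pnatr_eq0 -lt0n.
Qed.

Lemma scaled_hadamard_row_sum i : \sum_j A i j = 1.
Proof.
under eq_bigr => j _ do rewrite !mxE.
by rewrite -mulr_sumr -rmorph_sum rowH mulVf.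
Qed.

Lemma scaled_hadamard_norm i j : `|A i j| = (Num.sqrt n%:R)^-1.
Proof.
rewrite !mxE normrM normfV -c_sqr sqrtr_sqr.
by case: (hadH.1 i j) => ->; rewrite ?rmorphN ?normrN normr1 mulr1.
Qed.
End NormalizedRegularHadamard.

Definition border_mx {R : fieldType} {n} (A : 'M[R]_n) (r : R) : 'M[R]_n.+1 :=
  \matrix_(i, j) match unlift ord0 i, unlift ord0 j with
    | None, None => - r
    | Some i', Some j' => A i' j' - (1 - r) / n%:R
    | _, _ => r
    end.

Lemma sumr_subr_mul (R : comPzRingType) n (x y : 'I_n -> R) s :
  \sum_j (x j - s) * (y j - s) =
  \sum_j x j * y j - s * (\sum_j x j + \sum_j y j) + s ^+ 2 *+ n.
Proof.
have expand j : (x j - s) * (y j - s) = x j * y j - (s * x j + s * y j) + s ^+ 2 by ring.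
under eq_bigr => j _ do rewrite expand.
by rewrite big_split sumrB big_split /= sumr_const card_ord -!mulr_sumr mulrDr.
Qed.

Section BorderMatrix.
Variables (R : fieldType) (n : nat) (A : 'M[R]_n) (r : R).
Hypotheses (n_neq0 : n%:R != 0 :> R) (r_sqr : r ^+ 2 * n.+1%:R = 1).
Hypotheses (A_orth : A *m A^T = 1%:M) (A_row : forall i, \sum_j A i j = 1).

Let A_dot i k : \sum_j A i j * A k j = (i == k)%:R.
Proof.
have := congr1 (fun M : 'M[R]_n => M i k) A_orth; rewrite !mxE => <-.
by apply: eq_bigr => j _; rewrite mxE.
Qed.

Lemma border_mx_mulmx_tr : border_mx A r *m (border_mx A r)^T = 1%:M.
Proof.
apply/matrixP => i k; rewrite !mxE; under eq_bigr => j _ do rewrite !mxE.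
rewrite big_ord_recl unlift_none; under eq_bigr => j _ do rewrite liftK.
case: unliftP => [i'|] ->; case: unliftP => [k'|] -> /=.
- rewrite (inj_eq lift_inj) sumr_subr_mul !A_row A_dot.
  rewrite -mulr_natr; apply/eqP; rewrite -subr_eq0; apply/eqP.
  transitivity ((r ^+ 2 * n.+1%:R - 1) / n%:R); last by rewrite r_sqr subrr mul0r.
  by rewrite -natr1; field.
- rewrite -mulr_suml sumrB A_row sumr_const card_ord -mulr_natr.
  by field.
- rewrite -mulr_sumr sumrB A_row sumr_const card_ord -mulr_natr.
  by field.
- by rewrite mulrNN sumr_const card_ord -mulrS -mulr_natr -expr2.
Qed.
End BorderMatrix.

Lemma inv_sqrtS_bounds (R : rcfType) {n} : (0 < n)%N ->
  let w : R := (Num.sqrt n%:R)^-1 in let r : R := (Num.sqrt n.+1%:R)^-1 in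
  [/\ w <= 1, 0 < r, r <= w & w <= r * (1 + w)].
Proof.
move=> n_gt0 w r; set m := Num.sqrt n%:R in w *; set q := Num.sqrt n.+1%:R in r *.
have m_ge1 : 1 <= m by rewrite -sqrtr1 ler_sqrt // ler1n.
have q_gt0 : 0 < q by rewrite sqrtr_gt0 ltr0n.
have q_sqr : q ^+ 2 = m ^+ 2 + 1 by rewrite !sqr_sqrtr // -natr1.
have m_le_q : m <= q by nra.
have q_le_m1 : q <= m + 1 by nra.
have w_gt0 : 0 < w by rewrite invr_gt0; lra.
have r_gt0 : 0 < r by rewrite invr_gt0.
have mw : m * w = 1 by rewrite mulfV // gt_eqF //; lra.
have qr : q * r = 1 by rewrite mulfV // gt_eqF.
have wr_gt0 : 0 < w * r by rewrite mulr_gt0.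
split => //; nra.
Qed.

Lemma border_mx_entry_near (R : rcfType) n (A : 'M[R]_n) (w r : R) :
  (0 < n)%N -> w ^+ 2 = n%:R^-1 -> 0 < r -> r <= w -> w <= r * (1 + w) ->
  (forall i j, `|A i j| = w) -> forall i j, `| `|border_mx A r i j| - w| <= w ^+ 2.
Proof.
move=> n_gt0 w_sqr r_gt0 r_le_w w_le A_norm i j.
have n_ge1 : 1 <= n%:R :> R by rewrite ler1n.
have w_le1 : w <= 1.
  have : w ^+ 2 <= 1 by rewrite w_sqr invf_le1 // ltr0n.
  nra.
have shift_le : `|(1 - r) / n%:R| <= w ^+ 2.
  rewrite w_sqr ger0_norm ?divr_ge0 ?ler0n ?subr_ge0 //; last lra.
  by rewrite ler_pdivrMr ?ltr0n // mulVf ?pnatr_eq0 -?lt0n //; lra.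
have border_le : `| `|r| - w| <= w ^+ 2.
  by rewrite (ger0_norm (ltW r_gt0)) distrC ger0_norm ?subr_ge0 //; nra.
rewrite mxE; case: unliftP => [i'|] _; case: unliftP => [j'|] _ //=; last by rewrite normrN.
rewrite -{1}(A_norm i' j'); apply: le_trans (ler_dist_dist _ _) _.
by rewrite addrAC subrr add0r normrN.
Qed.

Lemma band_of_dist_le_sqr (R : realFieldType) (w r y : R) :
  w <= 1 -> 0 < r -> r <= w -> w <= r * (1 + w) -> `|y - w| <= w ^+ 2 ->
  (1 - 3 * w) * r <= y <= (1 + 3 * w) * r.
Proof.
move=> w_le1 r_gt0 r_le_w w_le; rewrite ler_distl => /andP[lo hi].
apply/andP; split; nra.
Qed.

Lemma cvg_inv_sqrtn (R : realType) : (fun n : nat => (Num.sqrt n%:R)^-1 : R) @ \oo --> 0.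
Proof.
have sqrt_harmonic := cvg_comp _ _ (@cvg_harmonic R) (@sqrt_continuous R 0).
rewrite sqrtr0 in sqrt_harmonic.
rewrite -(@cvg_shiftS R^o).
suff -> : [sequence (Num.sqrt n.+1%:R)^-1]_n = Num.sqrt \o @harmonic R by [].
by apply/funext => n /=; rewrite sqrtrV.
Qed.

Theorem proposition3p5 (R : realType) :
  exists delta : nat -> R,
    delta @ \oo --> 0 /\
    forall n : nat, (0 < n)%N -> regular_hadamard_exists n ->
      exists M : 'M[R]_(n.+1),
        orthogonal_mx M /\
        forall i j,
          (1 - delta n) / Num.sqrt (n.+1)%:R <= `|M i j| /\
          `|M i j| <= (1 + delta n) / Num.sqrt (n.+1)%:R.
Proof.
exists (fun n => 3 * (Num.sqrt n%:R)^-1); split.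
  by rewrite -(mulr0 3); apply: cvgMl_tmp; exact: cvg_inv_sqrtn.
move=> n n_gt0 [H [hadH [c [rowH colH]]]].
have [w_le1 r_gt0 r_le_w w_le] := inv_sqrtS_bounds R n_gt0.
exists (border_mx (scaled_int_mx R H c) (Num.sqrt n.+1%:R)^-1); split.
  apply: border_mx_mulmx_tr.
  - by rewrite pnatr_eq0 -lt0n.
  - by rewrite exprVn sqr_sqrtr ?ler0n // mulVf // pnatr_eq0.
  - exact: scaled_hadamard_mulmx_tr.
  - exact: scaled_hadamard_row_sum.
move=> i j; apply/andP; apply: band_of_dist_le_sqr => //.
apply: border_mx_entry_near => //; first by rewrite exprVn sqr_sqrtr ?ler0n.
exact: scaled_hadamard_norm.
Qed.
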